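(* Let $n,r\ge1$ and let $\mathfrak{g}$ be of type $D_{n+1}$. Then \[ \det\left[\binom{2(n+i+j)+1}{n+i+j}\right]_{i,j=0}^{r-1}=\dim V(2r\omega_n)=\dim V(2r\omega_{n+1}). \]
   Context: For type $D_{n+1}$ ($\mathfrak{so}_{2n+2}$), $\omega_n$ and $\omega_{n+1}$ are the two spin fundamental weights, $\tfrac12(\epsilon_1+\cdots+\epsilon_n-\epsilon_{n+1})$ and $\tfrac12(\epsilon_1+\cdots+\epsilon_n+\epsilon_{n+1})$. *)

From HB Require Import structures.
From mathcomp Require Import all_boot all_order all_algebra.
Set Implicit Arguments. Unset Strict Implicit. Unset Printing Implicit Defensive.
Import Order.TTheory GRing.Theory Num.Theory.
Local Open Scope ring_scope.

(* Root system of type D_m (so_{2m}), weights in epsilon-coordinates: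
   a weight is lam : 'I_m -> rat, lam = sum_i lam i * eps_{i+1}.
   Positive roots: eps_i - eps_j, eps_i + eps_j (i < j).
   rho = (m-1, m-2, ..., 1, 0). *)
Definition rhoD (m : nat) (i : 'I_m) : rat := (m - 1 - i)%N%:R.

(* Dimension of the irreducible so_{2m}-module V(lam) with highest weight lam,
   given by the Weyl dimension formula
   prod_{alpha > 0} <lam + rho, alpha> / <rho, alpha>. *)
Definition dimV_D (m : nat) (lam : 'I_m -> rat) : rat :=
  \prod_(i < m) \prod_(j < m | (i < j)%N)
    (((lam i + rhoD i) - (lam j + rhoD j)) * ((lam i + rhoD i) + (lam j + rhoD j))
     / ((rhoD i - rhoD j) * (rhoD i + rhoD j))).

Definition omegaD (m k : nat) (i : 'I_m) : rat :=
  if (k <= m - 2)%N then (i < k)%N%:R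
  else if k == (m - 1)%N then (if (i < m - 1)%N then 1/2 else -(1/2))
  else 1/2.

From HB Require Import structures.
From mathcomp Require Import all_boot all_order all_algebra all_fingroup.
From mathcomp Require Import zify ring lra.
Set Implicit Arguments. Unset Strict Implicit. Unset Printing Implicit Defensive.
Import Order.TTheory GRing.Theory Num.Theory.
Local Open Scope ring_scope.

(* Let H_r(n) = det (hankel c r n) with c k = C(2k+1, k).  The Desnanot-Jacobi
   identity gives the condensation recurrence
     H_(r+2)(n) H_r(n+2) = H_(r+1)(n+2) H_(r+1)(n) - H_(r+1)(n+1)^2,
   which together with H_0 = 1 and H_1 = c determines H as long as no value vanishes.
   The product P(r,n) = weylD r n = prod_(0 <= b < a <= n) (2r+a+b)/(a+b), which is the Weyl
   dimension formula for the weight r(eps_1 + ... + eps_(n+1)) = 2r omega_(n+1), is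
   positive and satisfies the same recurrence and initial values; this reduces to
   rational function identities for the ratios P(r,n+1)/P(r,n).  Finally 2r omega_n
   differs from 2r omega_(n+1) only in the sign of the last coordinate, where rho
   vanishes, so the Weyl formula takes the same value on both. *)

Lemma det_mx22 (R : comPzRingType) (M : 'M[R]_2) : \det M = M 0 0 * M 1 1 - M 0 1 * M 1 0.
Proof.
rewrite (expand_det_row _ 0) !big_ord_recl big_ord0 /cofactor !det_mx11 !mxE /=.
rewrite expr0 expr1 mul1r mulN1r addr0 mulrN.
by congr (M _ _ * M _ _ - M _ _ * M _ _); apply/val_inj.
Qed.

Lemma det_row_perm (R : comPzRingType) k (s : 'S_k) (M : 'M[R]_k) :
  \det (row_perm s M) = (-1) ^+ s * \det M.
Proof. by rewrite row_permE det_mulmx det_perm. Qed.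

Lemma det_col_perm (R : comPzRingType) k (s : 'S_k) (M : 'M[R]_k) :
  \det (col_perm s M) = (-1) ^+ s * \det M.
Proof. by rewrite col_permE det_mulmx det_perm odd_permV mulrC. Qed.

Lemma det_conj_perm (R : comPzRingType) k (s : 'S_k) (M : 'M[R]_k) :
  \det (row_perm s (col_perm s M)) = \det M.
Proof. by rewrite det_row_perm det_col_perm mulrA -expr2 sqrr_sign mul1r. Qed.

Lemma det_ulsub_adj_nz (R : idomainType) m (A : 'M[R]_(2 + m)) : \det A != 0 ->
  \det (ulsubmx (\adj A)) = \det A * \det (drsubmx A).
Proof.
move=> detA_nz; have adjA := mul_mx_adj A.
rewrite -[A in A *m _]submxK -[\adj A]submxK mulmx_block (scalar_mx_block 2 m) in adjA.
case/eq_block_mx: adjA => ul _ dl _.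
pose B := block_mx (ulsubmx (\adj A)) 0 (dlsubmx (\adj A)) (1%:M : 'M_m).
have AB : A *m B = block_mx (\det A)%:M (ursubmx A) 0 (drsubmx A).
  by rewrite -[A in LHS]submxK mulmx_block !mulmx0 !mulmx1 !add0r ul dl.
move/(congr1 determinant): AB.
rewrite det_mulmx det_ublock det_lblock det1 mulr1 det_scalar => detAB.
by apply: (mulfI detA_nz); rewrite detAB expr2 mulrA.
Qed.

Lemma det_ulsub_adj (R : idomainType) m (A : 'M[R]_(2 + m)) :
  \det (ulsubmx (\adj A)) = \det A * \det (drsubmx A).
Proof.
(* Apply the invertible case to the generic matrix 'X + A and evaluate at 'X = 0. *)
pose XA := char_poly_mx (- A).
have XA0 : map_mx (horner_eval 0) XA = A.
  apply/matrixP => i j; rewrite !mxE /horner_eval.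
  by case: (i == j); rewrite /= ?mulr1n ?mulr0n !hornerE ?opprK ?add0r ?subr0.
have := @det_ulsub_adj_nz _ _ XA (monic_neq0 (char_poly_monic (- A))).
move/(congr1 (horner_eval 0)).
by rewrite rmorphM -!det_map_mx map_ulsubmx map_drsubmx map_mx_adj XA0.
Qed.

Definition ord_pred_perm m : 'S_m := perm (@ord_pred_inj m).

Lemma ord_pred_perm_lift0 m (i : 'I_m) : ord_pred_perm m.+1 (lift ord0 i) = lift ord_max i.
Proof.
apply/val_inj; rewrite permE /= /bump /= add0n modnDr modn_small; have := ltn_ord i; lia.
Qed.

(* Conjugating by [corner_perm m] moves the first and last rows and columns to the
   top-left 2 x 2 corner, keeping the inner ones in order. *)
Definition corner_perm m : 'S_m.+2 := lift_perm ord0 ord0 (ord_pred_perm m.+1).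

Lemma corner_perm_lift0 m (i : 'I_m.+1) :
  corner_perm m (lift ord0 i) = lift ord0 (ord_pred_perm m.+1 i).
Proof. exact: lift_perm_lift. Qed.

Lemma corner_perm_lift1 m (i : 'I_m.+1) :
  corner_perm m (lift (lift ord0 ord0) i) = lift ord_max i.
Proof.
case: (unliftP ord0 i) => [j ->|->]; last first.
  have -> : lift (lift ord0 ord0) ord0 = ord0 :> 'I_m.+2 by apply/val_inj.
  by rewrite /corner_perm lift_perm_id; apply/val_inj.
have -> : lift (lift ord0 ord0) (lift ord0 j) = lift ord0 (lift ord0 j) :> 'I_m.+2.
  by apply/val_inj.
rewrite corner_perm_lift0 ord_pred_perm_lift0; apply/val_inj.
by rewrite /= /bump /=; have := ltn_ord j; lia.
Qed.

Lemma desnanot_jacobi (R : idomainType) m (B : 'M[R]_m.+2) :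
  \det B * \det (\matrix_(i, j) B (lift ord0 (lift ord_max i)) (lift ord0 (lift ord_max j)))
  = \det (row' ord0 (col' ord0 B)) * \det (row' ord_max (col' ord_max B))
    - \det (row' ord0 (col' ord_max B)) * \det (row' ord_max (col' ord0 B)).
Proof.
set t := corner_perm m; set p := ord_pred_perm m.+1.
pose A : 'M[R]_(2 + m) := row_perm t (col_perm t B).
have minorA i0 j0 :
    row' i0 (col' j0 A) = \matrix_(i, j) B (t (lift i0 i)) (t (lift j0 j)).
  by apply/matrixP => i j; rewrite !mxE.
have := det_ulsub_adj A.
rewrite det_conj_perm det_mx22 !mxE /cofactor.
have -> : lshift m (0 : 'I_2) = ord0 by apply/val_inj.
have -> : lshift m (1 : 'I_2) = lift ord0 ord0 by apply/val_inj.
have inner : drsubmx A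
    = \matrix_(i, j) B (lift ord0 (lift ord_max i)) (lift ord0 (lift ord_max j)).
  apply/matrixP => i j; rewrite !mxE.
  have lift2 k : rshift 2 k = lift ord0 (lift ord0 k) :> 'I_m.+2 by apply/val_inj.
  by rewrite !lift2 !corner_perm_lift0 !ord_pred_perm_lift0.
have minor00 : \det (row' ord0 (col' ord0 A)) = \det (row' ord0 (col' ord0 B)).
  rewrite minorA -(det_conj_perm p (row' ord0 (col' ord0 B))); congr (\det _).
  by apply/matrixP => i j; rewrite !mxE !corner_perm_lift0.
have minor11 : row' (lift ord0 ord0) (col' (lift ord0 ord0) A) = row' ord_max (col' ord_max B).
  by rewrite minorA; apply/matrixP => i j; rewrite !mxE !corner_perm_lift1.
have minor01 : \det (row' ord0 (col' (lift ord0 ord0) A))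
    = (-1) ^+ p * \det (row' ord0 (col' ord_max B)).
  rewrite minorA -det_row_perm; congr (\det _).
  by apply/matrixP => i j; rewrite !mxE corner_perm_lift0 corner_perm_lift1.
have minor10 : \det (row' (lift ord0 ord0) (col' ord0 A))
    = (-1) ^+ p * \det (row' ord_max (col' ord0 B)).
  rewrite minorA -det_col_perm; congr (\det _).
  by apply/matrixP => i j; rewrite !mxE corner_perm_lift0 corner_perm_lift1.
rewrite minor00 minor11 minor01 minor10 inner /= => <-.
by case: (odd_perm p); ring.
Qed.

Definition hankel (R : Type) (c : nat -> R) (k n : nat) : 'M[R]_k :=
  \matrix_(i < k, j < k) c (n + i + j)%N.

Lemma hankel_condensation (R : idomainType) (c : nat -> R) k n :
  \det (hankel c k.+2 n) * \det (hankel c k n.+2)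
  = \det (hankel c k.+1 n.+2) * \det (hankel c k.+1 n) - \det (hankel c k.+1 n.+1) ^+ 2.
Proof.
have := desnanot_jacobi (hankel c k.+2 n).
have -> : \matrix_(i, j) hankel c k.+2 n (lift ord0 (lift ord_max i)) (lift ord0 (lift ord_max j))
    = hankel c k n.+2.
  by apply/matrixP => i j; rewrite !mxE !lift0 !lift_max; congr c; lia.
have -> : row' ord0 (col' ord0 (hankel c k.+2 n)) = hankel c k.+1 n.+2.
  by apply/matrixP => i j; rewrite !mxE !lift0; congr c; lia.
have -> : row' ord_max (col' ord_max (hankel c k.+2 n)) = hankel c k.+1 n.
  by apply/matrixP => i j; rewrite !mxE !lift_max.
have -> : row' ord0 (col' ord_max (hankel c k.+2 n)) = hankel c k.+1 n.+1.
  by apply/matrixP => i j; rewrite !mxE lift0 lift_max; congr c; lia.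
have -> : row' ord_max (col' ord0 (hankel c k.+2 n)) = hankel c k.+1 n.+1.
  by apply/matrixP => i j; rewrite !mxE lift0 lift_max; congr c; lia.
by rewrite -expr2 => <-.
Qed.

Lemma det_hankel_eq (R : idomainType) (c : nat -> R) (f : nat -> nat -> R) :
  (forall n, f 0%N n = 1) -> (forall n, f 1%N n = c n) -> (forall k n, f k n != 0) ->
  (forall k n, f k.+2 n * f k n.+2 = f k.+1 n.+2 * f k.+1 n - f k.+1 n.+1 ^+ 2) ->
  forall k n, \det (hankel c k n) = f k n.
Proof.
move=> f0 f1 f_neq0 f_rec.
suff det_hankel2 k : (forall n, \det (hankel c k n) = f k n)
                    /\ (forall n, \det (hankel c k.+1 n) = f k.+1 n).
  by move=> k n; case: (det_hankel2 k) => ->.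
elim: k => [|k [IHk IHk1]].
  by split=> n; rewrite ?det_mx00 ?f0 // det_mx11 mxE !addn0 f1.
split=> // n; apply: (mulIf (f_neq0 k n.+2)).
by rewrite f_rec -!IHk1 -IHk; exact: hankel_condensation.
Qed.

Ltac field_pos := field; repeat (apply/andP; split); apply: lt0r_neq0; lra.

Lemma prodr_shift2_telescope (R : realFieldType) (x : R) k : 0 < x ->
  \prod_(0 <= b < k) ((x + b%:R + 2) / (x + b%:R))
  = (x + k%:R) * (x + k%:R + 1) / (x * (x + 1)).
Proof.
move=> x_gt0; elim: k => [|k IHk].
  by rewrite big_geq // addr0 divff // mulf_neq0 // lt0r_neq0 //; lra.
have k_ge0 := ler0n R k.
by rewrite big_nat_recr //= IHk -natr1; field_pos.
Qed.

Lemma central_bin_succ n :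
  'C((2 * n.+1).+1, n.+1)%:R
  = 'C((2 * n).+1, n)%:R * ((2 * n%:R + 2) * (2 * n%:R + 3) / ((n%:R + 1) * (n%:R + 2))) :> rat.
Proof.
have diag := mul_bin_diag (2 * n).+2 n; have down := mul_bin_down (2 * n).+3 n.+1.
rewrite /= in diag down.
have : ('C((2 * n.+1).+1, n.+1) * ((n + 1) * (n + 2))
        = 'C((2 * n).+1, n) * ((2 * n + 2) * (2 * n + 3)))%N.
  have -> : (2 * n.+1).+1 = (2 * n).+3 by lia.
  nia.
move/(congr1 (fun k => k%:R : rat)); rewrite !natrM !natrD => bin_eq.
have n_ge0 := ler0n rat n.
apply: (mulIf (x := (n%:R + 1) * (n%:R + 2))); first by apply: lt0r_neq0; nra.
by rewrite bin_eq; field_pos.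
Qed.

Definition weylD (r n : nat) : rat :=
  \prod_(0 <= a < n.+1) \prod_(0 <= b < a) ((2 * r%:R + a%:R + b%:R) / (a%:R + b%:R)).

Definition weylD_row (r n : nat) : rat :=
  \prod_(0 <= b < n.+1) ((2 * r%:R + n.+1%:R + b%:R) / (n.+1%:R + b%:R)).

Lemma weylD_n0 r : weylD r 0 = 1.
Proof. by rewrite /weylD big_nat1 big_geq. Qed.

Lemma weylD_nS r n : weylD r n.+1 = weylD r n * weylD_row r n.
Proof. by rewrite /weylD big_nat_recr. Qed.

Lemma weylD_row_gt0 r n : 0 < weylD_row r n.
Proof.
apply: prodr_gt0 => b _; have := ler0n rat r; have := ler0n rat b.
have := ltr0Sn rat n; move=> *; apply: divr_gt0; lra.
Qed.

Lemma weylD_gt0 r n : 0 < weylD r n.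
Proof. by elim: n => [|n IHn]; rewrite ?weylD_n0 // weylD_nS mulr_gt0 ?weylD_row_gt0. Qed.

Lemma weylD_row_rS r n :
  weylD_row r.+1 n = weylD_row r n *
    ((2 * r%:R + 2 * n%:R + 2) * (2 * r%:R + 2 * n%:R + 3)
     / ((2 * r%:R + n%:R + 1) * (2 * r%:R + n%:R + 2))).
Proof.
have r_ge0 := ler0n rat r; have n_ge0 := ler0n rat n.
pose x : rat := 2 * r%:R + n%:R + 1.
have x_gt0 : 0 < x by rewrite /x; lra.
transitivity (\prod_(0 <= b < n.+1)
    ((2 * r%:R + n.+1%:R + b%:R) / (n.+1%:R + b%:R) * ((x + b%:R + 2) / (x + b%:R)))).
  apply: eq_bigr => b _; have := ler0n rat b.
  by rewrite /x -[r.+1%:R]natr1 -[n.+1%:R]natr1 => *; field_pos.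
rewrite big_split /= prodr_shift2_telescope //; congr (_ * _).
by rewrite /x -[n.+1%:R]natr1; field_pos.
Qed.

Lemma weylD_row_nS r n :
  weylD_row r n.+1 = weylD_row r n *
    ((2 * r%:R + 2 * n%:R + 2) * (2 * r%:R + 2 * n%:R + 3) * (n%:R + 1)
     / ((2 * n%:R + 2) * (2 * n%:R + 3) * (2 * r%:R + n%:R + 1))).
Proof.
have r_ge0 := ler0n rat r; have n_ge0 := ler0n rat n.
pose g b : rat := (2 * r%:R + n%:R + 1 + b%:R) / (n%:R + 1 + b%:R).
have row_n : weylD_row r n = \prod_(0 <= b < n.+1) g b.
  by apply: eq_bigr => b _; rewrite /g -[n.+1%:R]natr1 !addrA.
have row_Sn : weylD_row r n.+1 = \prod_(0 <= b < n.+2) g b.+1.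
  apply: eq_bigr => b _; rewrite /g -[n.+2%:R]natr1 -[n.+1%:R]natr1 -[b.+1%:R]natr1.
  by congr (_ / _); ring.
have g0_neq0 : g 0%N != 0 by apply: lt0r_neq0; rewrite /g divr_gt0 //; lra.
have : weylD_row r n.+1 * g 0%N = weylD_row r n * g n.+1 * g n.+2.
  by rewrite row_Sn row_n mulrC -big_nat_recl // !big_nat_recr.
move/(canRL (mulfK g0_neq0)) ->.
by rewrite /g -[n.+2%:R]natr1 -[n.+1%:R]natr1; field_pos.
Qed.

Lemma weylD_rSS r n :
  weylD r.+2 n = weylD r.+1 n ^+ 2 / weylD r n *
    ((2 * r%:R + 2 * n%:R + 2) * (2 * r%:R + 2 * n%:R + 3) * (2 * r%:R + 1) * (2 * r%:R + 2)
     / ((2 * r%:R + n%:R + 1) * (2 * r%:R + n%:R + 2) ^+ 2 * (2 * r%:R + n%:R + 3))).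
Proof.
have r_ge0 := ler0n rat r.
elim: n => [|n IHn]; first by rewrite !weylD_n0; field_pos.
have n_ge0 := ler0n rat n.
have P_gt0 := weylD_gt0 r n; have row_gt0 := weylD_row_gt0 r n.
rewrite !weylD_nS IHn !weylD_row_rS -[r.+1%:R]natr1 -[n.+1%:R]natr1.
by field_pos.
Qed.

Lemma weylD_condensation r n :
  weylD r.+2 n * weylD r n.+2
  = weylD r.+1 n.+2 * weylD r.+1 n - weylD r.+1 n.+1 ^+ 2.
Proof.
have r_ge0 := ler0n rat r; have n_ge0 := ler0n rat n.
have P_gt0 := weylD_gt0 r n; have row_gt0 := weylD_row_gt0 r n.
rewrite weylD_rSS !weylD_nS !weylD_row_nS !weylD_row_rS -[r.+1%:R]natr1.
by field_pos.
Qed.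

Lemma weylD_row_r0 n : weylD_row 0 n = 1.
Proof.
by apply: big1 => b _; rewrite mulr0 add0r divff // -natrD pnatr_eq0 addSn.
Qed.

Lemma weylD_r0 n : weylD 0 n = 1.
Proof. by elim: n => [|n IHn]; rewrite ?weylD_n0 // weylD_nS IHn weylD_row_r0 mulr1. Qed.

Lemma weylD_r1 n : weylD 1 n = 'C((2 * n).+1, n)%:R.
Proof.
elim: n => [|n IHn]; first by rewrite weylD_n0.
by rewrite weylD_nS IHn weylD_row_rS weylD_row_r0 mul1r central_bin_succ mulr0 !add0r.
Qed.

Lemma eq_dimV_D m (l1 l2 : 'I_m -> rat) :
  (forall i, (l1 i + rhoD i) ^+ 2 = (l2 i + rhoD i) ^+ 2) -> dimV_D l1 = dimV_D l2.
Proof.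
move=> sqr_eq; apply: eq_bigr => i _; apply: eq_bigr => j _.
have sqrB (x y : rat) : (x - y) * (x + y) = x ^+ 2 - y ^+ 2 by ring.
by rewrite !sqrB !sqr_eq.
Qed.

Lemma rhoD_rev n (i : 'I_n.+1) : rhoD (rev_ord i) = i%:R.
Proof. by rewrite /rhoD; apply/eqP; rewrite eqr_nat /=; apply/eqP; have := ltn_ord i; lia. Qed.

Lemma dimV_D_const r n : dimV_D (fun _ : 'I_n.+1 => r%:R) = weylD r n.
Proof.
rewrite /dimV_D /weylD big_mkord (reindex_inj rev_ord_inj); apply: eq_bigr => a _.
rewrite (reindex_inj rev_ord_inj) (big_nat_widen 0 a n.+1); last exact: ltnW.
have rev_lt (b : 'I_n.+1) : (rev_ord a < rev_ord b)%N = (b < a)%N.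
  by rewrite /=; have := ltn_ord a; have := ltn_ord b; lia.
rewrite big_mkord; apply: eq_big => [b | b]; first by rewrite rev_lt.
rewrite rev_lt !rhoD_rev => lt_ba; have := ler0n rat b; have := ler0n rat r.
have : b.+1%:R <= a%:R :> rat by rewrite ler_nat.
by rewrite -natr1 => *; field_pos.
Qed.

Lemma omegaD_spin_plus r n (i : 'I_n.+1) : (1 <= n)%N ->
  (2 * r)%:R * @omegaD n.+1 n.+1 i = r%:R.
Proof.
move=> n_gt0; rewrite /omegaD ifN; last by rewrite -ltnNge; lia.
by rewrite ifN ?natrM; [field | apply/eqP; lia].
Qed.

Lemma omegaD_spin_minus r n (i : 'I_n.+1) : (1 <= n)%N ->
  ((2 * r)%:R * @omegaD n.+1 n i + rhoD i) ^+ 2 = (r%:R + rhoD i) ^+ 2.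
Proof.
move=> n_gt0; rewrite /omegaD ifN; last by rewrite -ltnNge; lia.
rewrite ifT; last by apply/eqP; lia.
have [lt_in | le_ni] := ifPn; rewrite natrM; first by field.
have -> : rhoD i = 0.
  by rewrite /rhoD; apply/eqP; rewrite pnatr_eq0; apply/eqP; move: le_ni (ltn_ord i); lia.
by field.
Qed.

Lemma det_hankel_central_bin r n :
  \det (hankel (fun k => 'C((2 * k).+1, k)%:R : rat) r n) = weylD r n.
Proof.
apply: det_hankel_eq => [k | k | k m | k m].
- exact: weylD_r0.
- exact: weylD_r1.
- exact/lt0r_neq0/weylD_gt0.
- exact: weylD_condensation.
Qed.

Theorem corollary5p32 (n r : nat) (hn : (1 <= n)%N) (hr : (1 <= r)%N) :
  \det (\matrix_(i < r, j < r)
          ('C((2 * (n + i + j)).+1, n + i + j))%:R : 'M[rat]_r)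
    = dimV_D (fun i : 'I_n.+1 => (2 * r)%:R * @omegaD n.+1 n i)
  /\ dimV_D (fun i : 'I_n.+1 => (2 * r)%:R * @omegaD n.+1 n i)
    = dimV_D (fun i : 'I_n.+1 => (2 * r)%:R * @omegaD n.+1 n.+1 i).
Proof.
have minus : dimV_D (fun i : 'I_n.+1 => (2 * r)%:R * @omegaD n.+1 n i) = weylD r n.
  by rewrite -dimV_D_const; apply: eq_dimV_D => i; rewrite omegaD_spin_minus.
have plus : dimV_D (fun i : 'I_n.+1 => (2 * r)%:R * @omegaD n.+1 n.+1 i) = weylD r n.
  by rewrite -dimV_D_const; apply: eq_dimV_D => i; rewrite omegaD_spin_plus.
by rewrite minus plus -det_hankel_central_bin.
Qed.
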